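(* Assume the setup in the context. Then $2\le K\le T$ always holds, and for every outcome with $T\le n-3$: (i) if $K\le T\le \frac{3K+2}{2}$, then $\displaystyle\sum_{i=T+1}^n v_i^2\le U_K(T)\,(1+|X_T|)^2$; (ii) if $\frac{3K+2}{2}\le T$, then $\displaystyle\sum_{i=T+1}^n v_i^2\le U_K\!\left(\tfrac{3K+2}{2}\right)(1+|X_T|)^2$, where $U_K(s):=\dfrac{(K+1)^2-s}{(2K+1)^2}$ for real $s$.
   Context: Let $n\ge4$ and let $v_1,\dots,v_n$ be real numbers with $\sum_{i=1}^n v_i^2\le1$ ordered so that $v_n\ge v_1\ge v_{n-1}\ge v_2\ge v_3\ge\cdots\ge v_{n-2}\ge0$. Let $\epsilon_1,\dots,\epsilon_n$ be independent Rademacher random variables ($\pm1$ with probability $\tfrac12$ each). For $t\in\{1,\dots,n-1\}$ put $X_t:=\sum_{i=1}^t v_i\epsilon_i$ and $Y_t:=\sum_{i=t+1}^n v_i\epsilon_i$, and for $t\in\{1,\dots,n\}$ put $M_t:=\sum_{i=1}^t v_i$. Define the random time $T:=\min\big(\{t\le n-1: |X_t|>1-v_{t+1}\}\cup\{n-1\}\big)$ and the deterministic index $K:=\min\big(\{t\le n-1: M_t>1-v_{t+1}\}\cup\{n-1\}\big)$. *)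

From Stdlib Require Import Reals Lra Lia List.
Import ListNotations.
Open Scope R_scope.

(* sumR f a b = sum_{i=a}^{b} f i  (empty, i.e. 0, if b < a) *)
Definition sumR (f : nat -> R) (a b : nat) : R :=
  fold_right Rplus 0 (map f (seq a (S b - a))).

Definition Xt (v eps : nat -> R) (t : nat) : R := sumR (fun i => v i * eps i) 1 t.

Definition Mt (v : nat -> R) (t : nat) : R := sumR v 1 t.

Definition is_min_stop (S : nat -> Prop) (N t : nat) : Prop :=
  (1 <= t <= N)%nat /\ (S t \/ t = N) /\
  (forall s, (1 <= s < t)%nat -> ~ S s).

Definition U (K : nat) (s : R) : R :=
  ((INR K + 1) ^ 2 - s) / (2 * INR K + 1) ^ 2.

From Stdlib Require Import Reals Lra Lia List.
Open Scope R_scope.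

(* Put x := v_(T+1) and h := v_1^2 + ... + v_T^2. Every v_i with i <= T+1 is at least x,
   so h >= T x^2. The stopping rule for K gives M_(K+1) > 1, hence by Cauchy-Schwarz
   v_1^2 + ... + v_(K+1)^2 > 1/(K+1), so h >= 1/(K+1) + (T-K-1) x^2 as well. The tail is at
   most 1 - h and, since T stopped, 1 + |X_T| > 2 - x; the claim is then an inequality in x
   alone, settled by the first bound for x >= 1/(K+1) and by the second below it.
   K <= T because |X_t| <= M_t, and K >= 2 because v_1 + v_2 <= 1, as v_n >= v_1 and
   v_(n-1) >= v_2 force 2 (v_1^2 + v_2^2) <= 1. *)

Definition sum_map (f : nat -> R) (l : list nat) : R := fold_right Rplus 0 (map f l).

Lemma sum_map_app f l1 l2 : sum_map f (l1 ++ l2) = sum_map f l1 + sum_map f l2.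
Proof. unfold sum_map. induction l1 as [|a l1 IH]; simpl; [lra|]. rewrite IH. lra. Qed.

Lemma sum_map_le f g l : (forall i, In i l -> f i <= g i) -> sum_map f l <= sum_map g l.
Proof.
  unfold sum_map. induction l as [|a l IH]; intros H; simpl; [lra|].
  apply Rplus_le_compat; [apply H; left; reflexivity | apply IH; intros; apply H; right; assumption].
Qed.

Lemma sum_map_const_le f l c : (forall i, In i l -> c <= f i) -> INR (length l) * c <= sum_map f l.
Proof.
  unfold sum_map. induction l as [|a l IH]; intros H; cbn [length map fold_right]; [simpl; lra|].
  assert (c <= f a) by (apply H; left; reflexivity).
  assert (INR (length l) * c <= fold_right Rplus 0 (map f l))
    by (apply IH; intros; apply H; right; assumption).
  rewrite S_INR. lra.
Qed.

Lemma Rabs_sum_map_le f l : Rabs (sum_map f l) <= sum_map (fun i => Rabs (f i)) l.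
Proof.
  unfold sum_map. induction l as [|a l IH]; simpl; [rewrite Rabs_R0; lra|].
  eapply Rle_trans; [apply Rabs_triang | lra].
Qed.

Lemma sum_map_sqr_le f l : (sum_map f l) ^ 2 <= INR (length l) * sum_map (fun i => f i ^ 2) l.
Proof.
  unfold sum_map. induction l as [|a l IH]; [simpl; lra|].
  destruct l as [|b l]; [simpl; lra|].
  cbn [length map fold_right] in *. rewrite S_INR.
  set (s := f b + fold_right Rplus 0 (map f l)) in *.
  set (q := f b ^ 2 + fold_right Rplus 0 (map (fun i => f i ^ 2) l)) in *.
  set (m := INR (S (length l))) in *.
  assert (0 < m) by (apply lt_0_INR; lia).
  assert (Hcross : 2 * s * f a <= q + m * f a ^ 2).
  { apply (Rmult_le_reg_l m); [assumption|].
    pose proof (pow2_ge_0 (s - m * f a)). nra. }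
  nra.
Qed.


Lemma sumR_sum_map f a b : sumR f a b = sum_map f (seq a (S b - a)).
Proof. reflexivity. Qed.

Lemma sumR_split f a m b : (a <= S m)%nat -> (m <= b)%nat ->
  sumR f a b = sumR f a m + sumR f (S m) b.
Proof.
  intros. rewrite !sumR_sum_map.
  replace (S b - a)%nat with ((S m - a) + (S b - S m))%nat by lia.
  rewrite seq_app, sum_map_app. replace (a + (S m - a))%nat with (S m) by lia. reflexivity.
Qed.

Lemma sumR_single f a : sumR f a a = f a.
Proof. unfold sumR. rewrite Nat.sub_succ_l, Nat.sub_diag by lia. simpl. lra. Qed.

Lemma sumR_succ f a b : (a <= S b)%nat -> sumR f a (S b) = sumR f a b + f (S b).
Proof. intros. rewrite (sumR_split f a b (S b)), sumR_single by lia. reflexivity. Qed.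

Lemma sumR_le f g a b : (forall i, (a <= i <= b)%nat -> f i <= g i) ->
  sumR f a b <= sumR g a b.
Proof.
  intros H. rewrite !sumR_sum_map. apply sum_map_le.
  intros i Hi. apply in_seq in Hi. apply H. lia.
Qed.

Lemma sumR_const_le f a b c : (forall i, (a <= i <= b)%nat -> c <= f i) ->
  INR (S b - a) * c <= sumR f a b.
Proof.
  intros H. rewrite sumR_sum_map, <- (length_seq (S b - a) a) at 1.
  apply sum_map_const_le. intros i Hi. apply in_seq in Hi. apply H. lia.
Qed.

Lemma sumR_nonneg f a b : (forall i, (a <= i <= b)%nat -> 0 <= f i) -> 0 <= sumR f a b.
Proof. intros H. pose proof (sumR_const_le f a b 0 H). lra. Qed.

Lemma Rabs_sumR_le f a b : Rabs (sumR f a b) <= sumR (fun i => Rabs (f i)) a b.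
Proof. rewrite !sumR_sum_map. apply Rabs_sum_map_le. Qed.

Lemma sumR_sqr_le f a b : (sumR f a b) ^ 2 <= INR (S b - a) * sumR (fun i => f i ^ 2) a b.
Proof.
  pose proof (sum_map_sqr_le f (seq a (S b - a))) as H. rewrite length_seq in H. exact H.
Qed.
Lemma U_bound_small_x (k t x : R) : 1 <= k -> t <= (3 * k - 1) / 2 -> 0 <= x -> k * x <= 1 ->
  1 - 1 / k - (t - k) * x ^ 2 <= (k ^ 2 - t) / (2 * k - 1) ^ 2 * (2 - x) ^ 2.
Proof.
  intros Hk Ht Hx Hkx.
  set (m := 2 * k - 1).
  set (E0 := 2 * m * k * (3 * k - 1 - 2 * t)).
  set (E1 := k * (8 * k ^ 2 - 5 * k + 1 - 4 * k * t)).
  assert (Hm : 0 < m) by (unfold m; lra).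
  assert (Hid : (k ^ 2 - t) / m ^ 2 * (2 - x) ^ 2 - (1 - 1 / k - (t - k) * x ^ 2)
              = (1 - k * x) * (k * x * E0 + (1 - k * x) * E1) / (k ^ 2 * m ^ 2)).
  { unfold E0, E1, m. field. lra. }
  assert (HE0 : 0 <= E0) by (unfold E0; apply Rmult_le_pos; [apply Rmult_le_pos|]; lra).
  assert (HE1 : 0 <= E1) by (unfold E1; apply Rmult_le_pos; nra).
  assert (0 <= (1 - k * x) * (k * x * E0 + (1 - k * x) * E1) / (k ^ 2 * m ^ 2)).
  { apply Rmult_le_pos.
    - apply Rmult_le_pos; [lra|]. assert (0 <= k * x) by nra. nra.
    - left. apply Rinv_0_lt_compat. apply Rmult_lt_0_compat; apply pow_lt; lra. }
  lra.
Qed.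

Lemma U_bound_large_x (k t x : R) : 1 <= k -> k <= 2 * t -> 1 <= k * x ->
  1 - t * x ^ 2 <= (k ^ 2 - t) / (2 * k - 1) ^ 2 * (2 - x) ^ 2.
Proof.
  intros Hk Ht Hkx.
  set (m := 2 * k - 1).
  set (E := 2 * m * k * (2 * t - k) + (k ^ 2 + (m ^ 2 - 1) * t) * (k * x - 1)).
  assert (Hm : 1 <= m) by (unfold m; lra).
  assert (Hid : (k ^ 2 - t) / m ^ 2 * (2 - x) ^ 2 - (1 - t * x ^ 2)
              = (k * x - 1) * E / (k ^ 2 * m ^ 2)).
  { unfold E, m. field. lra. }
  assert (HE : 0 <= E).
  { assert (0 <= 2 * m * k * (2 * t - k)) by (apply Rmult_le_pos; [apply Rmult_le_pos|]; lra).
    assert (0 <= (m ^ 2 - 1) * t) by (apply Rmult_le_pos; nra).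
    assert (0 <= (k ^ 2 + (m ^ 2 - 1) * t) * (k * x - 1)) by (apply Rmult_le_pos; nra).
    unfold E. lra. }
  assert (0 <= (k * x - 1) * E / (k ^ 2 * m ^ 2)).
  { apply Rmult_le_pos; [apply Rmult_le_pos; lra|].
    left. apply Rinv_0_lt_compat. apply Rmult_lt_0_compat; apply pow_lt; lra. }
  lra.
Qed.

Lemma U_bound (k t x h Y : R) : 1 <= k -> k <= t <= (3 * k + 2) / 2 ->
  0 <= x <= 2 -> 2 - x <= Y ->
  t * x ^ 2 <= h -> 1 / (k + 1) + (t - (k + 1)) * x ^ 2 <= h ->
  1 - h <= ((k + 1) ^ 2 - t) / (2 * k + 1) ^ 2 * Y ^ 2.
Proof.
  intros Hk Ht Hx HY Hh1 Hh2.
  replace (2 * k + 1) with (2 * (k + 1) - 1) by ring.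
  assert (Hx2 : 1 - h <= ((k + 1) ^ 2 - t) / (2 * (k + 1) - 1) ^ 2 * (2 - x) ^ 2).
  { destruct (Rle_dec ((k + 1) * x) 1).
    - pose proof (U_bound_small_x (k + 1) t x ltac:(lra) ltac:(lra) ltac:(lra) r). lra.
    - pose proof (U_bound_large_x (k + 1) t x ltac:(lra) ltac:(lra) ltac:(lra)). lra. }
  assert (0 <= ((k + 1) ^ 2 - t) / (2 * (k + 1) - 1) ^ 2).
  { apply Rmult_le_pos; [nra|]. left. apply Rinv_0_lt_compat. apply pow_lt; lra. }
  assert ((2 - x) ^ 2 <= Y ^ 2) by (apply pow_incr; lra).
  nra.
Qed.

Lemma is_min_stop_holds (P : nat -> Prop) N t : is_min_stop P N t -> (t < N)%nat -> P t.
Proof. intros [_ [[HP | HN] _]] Ht; [assumption | lia]. Qed.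

Lemma is_min_stop_le (P Q : nat -> Prop) N s t :
  (forall u, (1 <= u <= N)%nat -> P u -> Q u) ->
  is_min_stop Q N s -> is_min_stop P N t -> (s <= t)%nat.
Proof.
  intros HPQ Hs Ht. destruct (Nat.le_gt_cases s t) as [|Hts]; [assumption|].
  exfalso. destruct Hs as [Hs [_ Hmin]].
  apply (Hmin t); [destruct Ht; lia|]. apply HPQ; [destruct Ht; lia|].
  apply (is_min_stop_holds P N t); [assumption | lia].
Qed.

Section OrderedWeights.

Variables (n : nat) (v : nat -> R).
Hypotheses (hn : (4 <= n)%nat)
  (h1 : v n >= v 1%nat) (h2 : v 1%nat >= v (n - 1)%nat)
  (h3 : v (n - 1)%nat >= v 2%nat)
  (h4 : forall i, (2 <= i)%nat -> (i < n - 2)%nat -> v i >= v (S i))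
  (h5 : v (n - 2)%nat >= 0).

Lemma weight_antitone i j : (1 <= i <= j)%nat -> (j <= n - 2)%nat -> v j <= v i.
Proof.
  intros Hij Hj. induction j as [|j IH]; [lia|].
  destruct (Nat.eq_dec i (S j)) as [->|]; [lra|].
  assert (v (S j) <= v j).
  { destruct (Nat.eq_dec j 1) as [->|]; [lra | apply Rge_le, h4; lia]. }
  assert (v j <= v i) by (apply IH; lia). lra.
Qed.

Lemma weight_nonneg i : (1 <= i <= n)%nat -> 0 <= v i.
Proof.
  intros Hi. assert (v (n - 2)%nat <= v 2%nat) by (apply weight_antitone; lia).
  destruct (Nat.le_gt_cases i (n - 2)).
  - assert (v (n - 2)%nat <= v i) by (apply weight_antitone; lia). lra.
  - assert (i = n - 1 \/ i = n)%nat as [-> | ->] by lia; lra.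
Qed.

Lemma weight_sq_antitone i j : (1 <= i <= j)%nat -> (j <= n - 2)%nat -> v j ^ 2 <= v i ^ 2.
Proof.
  intros. apply pow_incr. split; [apply weight_nonneg; lia | apply weight_antitone; lia].
Qed.

Lemma Rabs_Xt_le_Mt eps : (forall i, (1 <= i <= n)%nat -> eps i = 1 \/ eps i = -1) ->
  forall t, (t <= n)%nat -> Rabs (Xt v eps t) <= Mt v t.
Proof.
  intros heps t Ht. unfold Xt, Mt. eapply Rle_trans; [apply Rabs_sumR_le|].
  apply sumR_le. intros i Hi. rewrite Rabs_mult, (Rabs_pos_eq (v i)) by (apply weight_nonneg; lia).
  destruct (heps i) as [-> | ->]; [lia | rewrite Rabs_R1 | rewrite Rabs_left]; lra.
Qed.

Lemma first_two_weights_sum_le (hsq : sumR (fun i => v i ^ 2) 1 n <= 1) :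
  v 1%nat + v 2%nat <= 1.
Proof.
  set (sq := fun i => v i ^ 2) in *.
  assert (Hsplit : sumR sq 1 n = sq 1%nat + sq 2%nat + sumR sq 3 (n - 2) + sq (n - 1)%nat + sq n).
  { rewrite (sumR_split sq 1 2 n), (sumR_split sq 3 (n - 2) n), (sumR_split sq _ (n - 1) n)
      by lia.
    replace (S (n - 2)) with (n - 1)%nat by lia. replace (S (n - 1)) with n by lia.
    rewrite (sumR_succ sq 1 1), !sumR_single by lia. ring. }
  assert (0 <= sumR sq 3 (n - 2)) by (apply sumR_nonneg; intros; apply pow2_ge_0).
  assert (0 <= v 1%nat) by (apply weight_nonneg; lia).
  assert (0 <= v 2%nat) by (apply weight_nonneg; lia).
  assert (v 1%nat ^ 2 <= v n ^ 2) by (apply pow_incr; lra).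
  assert (v 2%nat ^ 2 <= v (n - 1)%nat ^ 2) by (apply pow_incr; lra).
  unfold sq in *. nra.
Qed.

Lemma head_sum_ge_uniform t : (t <= n - 3)%nat ->
  INR t * v (S t) ^ 2 <= sumR (fun i => v i ^ 2) 1 t.
Proof.
  intros Ht. replace t with (S t - 1)%nat at 1 by lia.
  apply sumR_const_le. intros. apply weight_sq_antitone; lia.
Qed.

Lemma head_sum_ge_CS k t : (k <= t <= n - 3)%nat -> 1 < Mt v (S k) ->
  1 / (INR k + 1) + (INR t - (INR k + 1)) * v (S t) ^ 2 <= sumR (fun i => v i ^ 2) 1 t.
Proof.
  intros Hkt HM. set (sq := fun i => v i ^ 2).
  assert (HCS : 1 < (INR k + 1) * sumR sq 1 (S k)).
  { pose proof (sumR_sqr_le v 1 (S k)) as H.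
    replace (S (S k) - 1)%nat with (S k) in H by lia. rewrite S_INR in H. fold sq in H.
    unfold Mt in HM. nra. }
  assert (Hhead : 1 / (INR k + 1) < sumR sq 1 (S k)).
  { assert (0 < INR k + 1) by (pose proof (pos_INR k); lra).
    apply (Rmult_lt_reg_l (INR k + 1)); [assumption|].
    replace ((INR k + 1) * (1 / (INR k + 1))) with 1 by (field; lra). exact HCS. }
  assert (Hrest : INR (t - k) * sq (S t) <= sumR sq (S (S k)) (S t)).
  { replace (t - k)%nat with (S (S t) - S (S k))%nat by lia.
    apply sumR_const_le. intros. apply weight_sq_antitone; lia. }
  rewrite minus_INR in Hrest by lia.
  assert (sumR sq 1 (S t) = sumR sq 1 (S k) + sumR sq (S (S k)) (S t)) by (apply sumR_split; lia).
  assert (sumR sq 1 (S t) = sumR sq 1 t + sq (S t)) by (apply sumR_succ; lia).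
  change (v (S t) ^ 2) with (sq (S t)). lra.
Qed.

Lemma Mt_stop_ge_2 (hsq : sumR (fun i => v i ^ 2) 1 n <= 1) K :
  is_min_stop (fun t => Mt v t > 1 - v (S t)) (n - 1) K -> (2 <= K)%nat.
Proof.
  intros hK. destruct (Nat.le_gt_cases 2 K) as [|HK]; [assumption|]. exfalso.
  assert (K = 1%nat) as -> by (destruct hK as [? _]; lia).
  pose proof (is_min_stop_holds _ _ _ hK ltac:(lia)) as HM.
  unfold Mt in HM. rewrite sumR_single in HM.
  pose proof (first_two_weights_sum_le hsq). lra.
Qed.

Lemma Mt_stop_le_Xt_stop eps K T :
  (forall i, (1 <= i <= n)%nat -> eps i = 1 \/ eps i = -1) ->
  is_min_stop (fun t => Mt v t > 1 - v (S t)) (n - 1) K ->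
  is_min_stop (fun t => Rabs (Xt v eps t) > 1 - v (S t)) (n - 1) T -> (K <= T)%nat.
Proof.
  intros heps. apply is_min_stop_le. intros u Hu HX.
  pose proof (Rabs_Xt_le_Mt eps heps u ltac:(lia)). lra.
Qed.

End OrderedWeights.

Theorem mainTheorem6 (n : nat) (v : nat -> R)
  (hn : (4 <= n)%nat)
  (hsq : sumR (fun i => v i ^ 2) 1 n <= 1)
  (h1 : v n >= v 1%nat) (h2 : v 1%nat >= v (n - 1)%nat)
  (h3 : v (n - 1)%nat >= v 2%nat)
  (h4 : forall i, (2 <= i)%nat -> (i < n - 2)%nat -> v i >= v (S i))
  (h5 : v (n - 2)%nat >= 0)
  (eps : nat -> R) (heps : forall i, (1 <= i <= n)%nat -> eps i = 1 \/ eps i = -1)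
  (T K : nat)
  (hT : is_min_stop (fun t => Rabs (Xt v eps t) > 1 - v (S t)) (n - 1) T)
  (hK : is_min_stop (fun t => Mt v t > 1 - v (S t)) (n - 1) K) :
  (2 <= K /\ K <= T)%nat /\
  ((T <= n - 3)%nat ->
     (INR K <= INR T <= (3 * INR K + 2) / 2 ->
        sumR (fun i => v i ^ 2) (S T) n <= U K (INR T) * (1 + Rabs (Xt v eps T)) ^ 2) /\
     ((3 * INR K + 2) / 2 <= INR T ->
        sumR (fun i => v i ^ 2) (S T) n
          <= U K ((3 * INR K + 2) / 2) * (1 + Rabs (Xt v eps T)) ^ 2)).
Proof.
  pose proof (Mt_stop_ge_2 n v hn h1 h2 h3 h4 h5 hsq K hK) as HK2.
  pose proof (Mt_stop_le_Xt_stop n v hn h1 h2 h3 h4 h5 eps K T heps hK hT) as HKT.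
  split; [lia|]. intros HT.
  set (x := v (S T)). set (head := sumR (fun i => v i ^ 2) 1 T).
  assert (Htot : head + sumR (fun i => v i ^ 2) (S T) n <= 1)
    by (unfold head; rewrite <- sumR_split by lia; exact hsq).
  assert (0 <= sumR (fun i => v i ^ 2) (S T) n) by (apply sumR_nonneg; intros; apply pow2_ge_0).
  assert (Hunif : INR T * x ^ 2 <= head) by (apply (head_sum_ge_uniform n v); assumption).
  assert (HMt : 1 < Mt v (S K)).
  { pose proof (is_min_stop_holds _ _ _ hK ltac:(lia)).
    unfold Mt in *. rewrite sumR_succ by lia. lra. }
  pose proof (head_sum_ge_CS n v hn h1 h2 h3 h4 h5 K T ltac:(lia) HMt) as HCS. fold x head in HCS.
  pose proof (is_min_stop_holds _ _ _ hT ltac:(lia)) as HX. cbv beta in HX. fold x in HX.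
  apply le_INR in HK2, HKT. change (INR 2) with 2 in HK2.
  assert (0 <= x) by (apply (weight_nonneg n v); auto; lia).
  assert (x <= 2) by nra.
  assert (0 <= x ^ 2) by apply pow2_ge_0.
  unfold U. split; intros Ht; apply Rle_trans with (1 - head); try lra;
    apply (U_bound _ _ x head); try lra; nra.
Qed.
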